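(* Let $x_1,x_2,x_3>0$, $\gamma,\delta>0$ with $\gamma\ne1\ne\delta$, and let $$\mathbf{Q}=\begin{pmatrix}1&\delta x_1&x_2&x_3\\ 1/(\delta x_1)&1&x_2/x_1&x_3/x_1\\ 1/x_2&x_1/x_2&1&\gamma x_3/x_2\\ 1/x_3&x_1/x_3&x_2/(\gamma x_3)&1\end{pmatrix}$$ with principal right eigenvector $\mathbf{w}^{EM}$. If $\delta,\gamma<1$, then $w_1^{EM}/w_4^{EM}<x_3$.
   Context: The principal right eigenvector is the positive (Perron) eigenvector belonging to the largest eigenvalue. *)

From HB Require Import structures.
From mathcomp Require Import all_boot all_order all_algebra.
From mathcomp Require Import reals.
Set Implicit Arguments. Unset Strict Implicit. Unset Printing Implicit Defensive.
Import Order.TTheory GRing.Theory Num.Theory.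
Local Open Scope ring_scope.

(* The 4x4 matrix Q of the paper (indices 0..3 correspond to 1..4). *)
Definition Qmat (R : realType) (x1 x2 x3 g d : R) : 'M[R]_4 :=
  \matrix_(i < 4, j < 4)
    nth 0 (nth [::]
      [:: [:: 1; d * x1; x2; x3];
          [:: (d * x1)^-1; 1; x2 / x1; x3 / x1];
          [:: x2^-1; x1 / x2; 1; g * x3 / x2];
          [:: x3^-1; x1 / x3; x2 / (g * x3); 1]] i) j.

Definition principal_right_eigvec (R : realType) (n : nat)
    (A : 'M[R]_n) (w : 'cV[R]_n) : Prop :=
  (forall i, 0 < w i 0) /\
  exists lam : R, A *m w = lam *: w /\
    (forall (mu : R) (v : 'cV[R]_n), v != 0 -> A *m v = mu *: v -> mu <= lam).

Definition idx4 (k : nat) (H : (k < 4)%N) : 'I_4 := Ordinal H.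

From HB Require Import structures.
From mathcomp Require Import all_boot all_order all_algebra.
From mathcomp Require Import reals.
From mathcomp Require Import ring lra.
Set Implicit Arguments. Unset Strict Implicit. Unset Printing Implicit Defensive.
Import Order.TTheory GRing.Theory Num.Theory.
Local Open Scope ring_scope.

(* Comparing the first and the last row of [Q w = lam w] gives
   [lam (w_1 - x_3 w_4) = (delta - 1) x_1 w_2 + x_2 (1 - 1/gamma) w_3],
   whose right-hand side is negative when [delta, gamma < 1]; and [lam > 0]
   because [Q] and [w] are positive. *)

Lemma eigenvalue_gt0_of_pos (R : realDomainType) (n : nat)
    (A : 'M[R]_n.+1) (w : 'cV[R]_n.+1) (lam : R) :
  (forall i j, 0 < A i j) -> (forall i, 0 < w i 0) ->
  A *m w = lam *: w -> 0 < lam.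
Proof.
move=> A_gt0 w_gt0 Aw.
have row0 := congr1 (fun v : 'cV[R]_n.+1 => v ord0 0) Aw.
rewrite /= !mxE big_ord_recl in row0.
have : 0 < lam * w ord0 0.
  rewrite -row0 ltr_pwDl ?mulr_gt0 //.
  by apply: sumr_ge0 => j _; rewrite ltW ?mulr_gt0.
by rewrite pmulr_lgt0.
Qed.

Section EMMatrix.

Variables (R : realType) (x1 x2 x3 g d : R).
Hypotheses (x1_gt0 : 0 < x1) (x2_gt0 : 0 < x2) (x3_gt0 : 0 < x3).
Hypotheses (g_gt0 : 0 < g) (d_gt0 : 0 < d).

Local Notation Q := (Qmat x1 x2 x3 g d).
Local Notation "w `[ k ]" := (w (@idx4 k isT) 0) (at level 2, format "w `[ k ]").

Lemma Qmat_gt0 (i j : 'I_4) : 0 < Q i j.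
Proof.
rewrite mxE; case: i => [[|[|[|[|//]]]] ?]; case: j => [[|[|[|[|//]]]] ?] /=;
by rewrite ?(mulr_gt0, divr_gt0, invr_gt0).
Qed.

Lemma Qmat_mulmx_row0 (w : 'cV[R]_4) :
  (Q *m w) (@idx4 0 isT) 0 = w`[0] + d * x1 * w`[1] + x2 * w`[2] + x3 * w`[3].
Proof.
rewrite mxE !big_ord_recl big_ord0 !mxE /= addr0 mul1r.
rewrite !addrA; do ?congr (_ + _); try congr (_ * _); congr (w _ 0); exact: val_inj.
Qed.

Lemma Qmat_mulmx_row3 (w : 'cV[R]_4) :
  (Q *m w) (@idx4 3 isT) 0 =
    x3^-1 * w`[0] + x1 / x3 * w`[1] + x2 / (g * x3) * w`[2] + w`[3].
Proof.
rewrite mxE !big_ord_recl big_ord0 !mxE /= addr0 mul1r.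
rewrite !addrA; do ?congr (_ + _); try congr (_ * _); congr (w _ 0); exact: val_inj.
Qed.

Lemma Qmat_eigen_row_diff (w : 'cV[R]_4) (lam : R) :
  Q *m w = lam *: w ->
  lam * (w`[0] - x3 * w`[3]) = (d - 1) * x1 * w`[1] + x2 * (1 - g^-1) * w`[2].
Proof.
move=> Qw.
have row0 := congr1 (fun v : 'cV[R]_4 => v (@idx4 0 isT) 0) Qw.
have row3 := congr1 (fun v : 'cV[R]_4 => v (@idx4 3 isT) 0) Qw.
rewrite /= Qmat_mulmx_row0 mxE in row0; rewrite /= Qmat_mulmx_row3 mxE in row3.
by rewrite mulrBr mulrCA -row0 -row3; field; rewrite ?gt_eqF.
Qed.

End EMMatrix.

Theorem mainTheorem13 (R : realType) (x1 x2 x3 g d : R) (w : 'cV[R]_4) :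
  0 < x1 -> 0 < x2 -> 0 < x3 -> 0 < g -> 0 < d -> g != 1 -> d != 1 ->
  principal_right_eigvec (Qmat x1 x2 x3 g d) w ->
  d < 1 -> g < 1 ->
  w (@idx4 0 isT) 0 / w (@idx4 3 isT) 0 < x3.
Proof.
move=> x1_gt0 x2_gt0 x3_gt0 g_gt0 d_gt0 _ _ [w_gt0 [lam [Qw _]]] d_lt1 g_lt1.
have lam_gt0 : 0 < lam := eigenvalue_gt0_of_pos
  (Qmat_gt0 x1_gt0 x2_gt0 x3_gt0 g_gt0 d_gt0) w_gt0 Qw.
have rhs_lt0 : (d - 1) * x1 * w (@idx4 1 isT) 0
    + x2 * (1 - g^-1) * w (@idx4 2 isT) 0 < 0.
  have ginv_gt1 : 1 < g^-1 by rewrite invf_gt1.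
  have : 0 < (1 - d) * x1 * w (@idx4 1 isT) 0
      + x2 * (g^-1 - 1) * w (@idx4 2 isT) 0.
    by rewrite addr_gt0 ?mulr_gt0 ?subr_gt0.
  lra.
rewrite ltr_pdivrMr // -subr_lt0 -(pmulr_rlt0 _ lam_gt0).
by rewrite (Qmat_eigen_row_diff x3_gt0 g_gt0 Qw).
Qed.
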